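(* Let $\lambda\in\mathcal{X}(T)^+$ and let $\pi$ be a $T$-weight occurring in $V(\lambda)$. Then $\pi\leqslant^\lambda\lambda$, i.e. $\lambda-\pi\in\mathbb{N}[\Phi^+(\lambda)]$.
   Context: $G$ is a connected semisimple group over an algebraically closed field of characteristic zero, $T\subset B$ a maximal torus and Borel subgroup, $\Phi^+$ the positive roots, $\Delta$ the simple roots, $\mathcal{X}(T)^+$ the dominant characters, $V(\lambda)$ the simple module of highest weight $\lambda$. $\operatorname{Supp}(\lambda)=\{\alpha\in\Delta:\langle\lambda,\alpha^\vee\rangle\neq0\}$; for $\beta=\sum n_\alpha\alpha$, $\operatorname{Supp}_\Delta(\beta)=\{\alpha:n_\alpha\neq0\}$; $\Phi^+(\lambda)=\{\beta\in\Phi^+:\operatorname{Supp}_\Delta(\beta)\cap\operatorname{Supp}(\lambda)\neq\varnothing\}$; $\nu\leqslant^\lambda\mu$ iff $\mu-\nu\in\mathbb{N}[\Phi^+(\lambda)]$. *)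

(* Root-datum / Lie-algebra encoding of the setting:
   G connected semisimple over an algebraically closed field of char 0 is
   encoded by its Cartan matrix A (of finite type) w.r.t. the base Delta
   determined by B ⊃ T; V(lambda) is encoded through the differentiated
   action of Lie(G) in Chevalley generators e_i, f_i, h_i (i in Delta). *)
From HB Require Import structures.
From mathcomp Require Import all_boot all_order all_algebra.
Set Implicit Arguments. Unset Strict Implicit. Unset Printing Implicit Defensive.
Import Order.TTheory GRing.Theory Num.Theory.
Local Open Scope ring_scope.

Section Defs.
Variable n : nat.
Variable A : 'M[int]_n.  (* A i j = < alpha_j , alpha_i^vee > *)

Definition finite_cartan : Prop :=
  [/\ forall i, A i i = 2,
      forall i j, i != j -> A i j <= 0,
      forall i j, (A i j == 0) = (A j i == 0) &
      exists D : 'rV[rat]_n,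
        (forall i, 0 < D 0 i) /\
        let S := \matrix_(i, j) (D 0 i * (A i j)%:~R) in
        S^T = S /\ forall x : 'rV[rat]_n, x != 0 -> 0 < (x *m S *m x^T) 0 0].

(* Elements of the root lattice are written in simple-root coordinates:
   b = sum_j b_j alpha_j.  Pairing with the simple coroot alpha_i^vee. *)
Definition pair_coroot (b : 'rV[int]_n) (i : 'I_n) : int :=
  \sum_j b 0 j * A i j.

(* The corresponding element in "weight coordinates" (<_, alpha_i^vee>)_i. *)
Definition wt_of (b : 'rV[int]_n) : 'rV[int]_n := \row_i pair_coroot b i.

Definition srefl (i : 'I_n) (b : 'rV[int]_n) : 'rV[int]_n :=
  b - pair_coroot b i *: delta_mx 0 i.

Inductive is_root : 'rV[int]_n -> Prop :=
| root_simple i : is_root (delta_mx 0 i)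
| root_refl i b : is_root b -> is_root (srefl i b).

Definition is_pos_root (b : 'rV[int]_n) : Prop :=
  is_root b /\ forall j, 0 <= b 0 j.

(* Weights are given by their coordinates (<lam, alpha_i^vee>)_i. *)
Definition Supp (lam : 'rV[int]_n) (j : 'I_n) : bool := lam 0 j != 0.
Definition SuppD (b : 'rV[int]_n) (j : 'I_n) : bool := b 0 j != 0.

Definition Phi_plus_of (lam : 'rV[int]_n) (b : 'rV[int]_n) : Prop :=
  is_pos_root b /\ exists j, SuppD b j && Supp lam j.

Definition dominant (lam : 'rV[int]_n) : Prop := forall i, 0 <= lam 0 i.

Definition le_lam (lam nu mu : 'rV[int]_n) : Prop :=
  exists s : seq 'rV[int]_n,
    (forall b, b \in s -> Phi_plus_of lam b) /\
    mu - nu = wt_of (\sum_(b <- s) b).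

Variable F : fieldType.
Variable d : nat.
Definition lie (X Y : 'M[F]_d) : 'M[F]_d := X *m Y - Y *m X.

(* Chevalley-Serre relations: (E,Fm,H) is a representation of Lie(G)
   on F^d (column vectors, action by left multiplication). *)
Definition is_rep (E Fm H : 'I_n -> 'M[F]_d) : Prop :=
  [/\ forall i j, lie (H i) (H j) = 0,
      forall i j, lie (H i) (E j) = (A i j)%:~R *: E j,
      forall i j, lie (H i) (Fm j) = - ((A i j)%:~R *: Fm j),
      forall i j, lie (E i) (Fm j) = if i == j then H i else 0 &
      forall i j, i != j ->
        iter `|1 - A i j|%N (lie (E i)) (E j) = 0 /\
        iter `|1 - A i j|%N (lie (Fm i)) (Fm j) = 0].

(* a subspace W (the row space of U, transposed) is stable under X *)
Definition stable_col (U X : 'M[F]_d) : bool := (U *m X^T <= U)%MS.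

Definition irreducible_rep (E Fm H : 'I_n -> 'M[F]_d) : Prop :=
  forall U : 'M[F]_d,
    (forall i, [&& stable_col U (E i), stable_col U (Fm i) & stable_col U (H i)]) ->
    U = 0 \/ row_full U.

Definition highest_weight (E H : 'I_n -> 'M[F]_d) (lam : 'rV[int]_n) : Prop :=
  exists v : 'cV[F]_d, v != 0 /\
    forall i, E i *m v = 0 /\ H i *m v = (lam 0 i)%:~R *: v.

Definition is_weight (H : 'I_n -> 'M[F]_d) (pi : 'rV[int]_n) : Prop :=
  exists w : 'cV[F]_d, w != 0 /\ forall i, H i *m w = (pi 0 i)%:~R *: w.

End Defs.

(* V(lam) is spanned by the vectors X_1 ... X_r v, where v is a highest weight
   vector and each X_l is an iterated bracket [F_j_s, [..., [F_j_2, F_j_1]]] of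
   weight -b_l whose support meets Supp(lam): the span of these vectors contains
   v and is stable under the E_i, F_j, H_k (F_j v = 0 when <lam, alpha_j^vee> = 0,
   by sl2 theory), hence it is everything by irreducibility.  A nonzero bracket
   of weight -b forces b to be a positive root: pick i with <b, alpha_i^vee> = m > 0
   (positive definiteness of the symmetrised Cartan matrix); unless b = alpha_i,
   ad(E_i)^m maps the bracket to a nonzero element of n^- of weight -s_i b, which
   has smaller height.  Separating a weight vector of weight pi along the spanning
   set gives a nonzero X_1 ... X_r v of weight pi, so lam - pi = b_1 + ... + b_r. *)

From HB Require Import structures.
From mathcomp Require Import all_boot all_order all_algebra.
From mathcomp Require Import ring zify.
Set Implicit Arguments. Unset Strict Implicit. Unset Printing Implicit Defensive.
Import Order.TTheory GRing.Theory Num.Theory.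
Local Open Scope ring_scope.

Section LabelledSpan.
Variables (F : fieldType) (V : lmodType F) (L : eqType) (P : V -> L -> Prop).

Definition lspan (Y : V) : Prop :=
  exists2 s : seq (F * V * L),
    (forall p, p \in s -> P p.1.2 p.2) & Y = \sum_(p <- s) p.1.1 *: p.1.2.

Lemma lspan0 : lspan 0.
Proof. by exists [::]; rewrite ?big_nil. Qed.

Lemma lspan_gen x l : P x l -> lspan x.
Proof.
move=> Pxl; exists [:: (1, x, l)]; last by rewrite big_seq1 scale1r.
by move=> p; rewrite inE => /eqP ->.
Qed.

Lemma lspan_lin a x y : lspan x -> lspan y -> lspan (a *: x + y).
Proof.
move=> [s Ps ->] [t Pt ->]; exists ([seq (a * p.1.1, p.1.2, p.2) | p <- s] ++ t).
  by move=> p; rewrite mem_cat => /orP [/mapP [q /Ps Pq ->] // | /Pt].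
by rewrite big_cat big_map scaler_sumr; congr (_ + _); apply: eq_bigr => p _; rewrite scalerA.
Qed.

Lemma lspanD x y : lspan x -> lspan y -> lspan (x + y).
Proof. by move=> sx sy; rewrite -[x]scale1r; apply: lspan_lin. Qed.

Lemma lspanZ a x : lspan x -> lspan (a *: x).
Proof. by move=> sx; rewrite -(addr0 (a *: x)); apply: lspan_lin => //; apply: lspan0. Qed.

Lemma lspan_map (W : lmodType F) (Q : W -> Prop) (g : {linear V -> W}) :
  Q 0 -> (forall a x y, Q x -> Q y -> Q (a *: x + y)) ->
  (forall x l, P x l -> Q (g x)) -> forall Y, lspan Y -> Q (g Y).
Proof.
move=> Q0 Qlin Qg Y [s Ps ->]; rewrite linear_sum.
elim: s Ps => [|p s IHs] Ps; first by rewrite big_nil.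
rewrite big_cons linearZZ; apply: Qlin; first exact/Qg/Ps/mem_head.
by apply: IHs => q sq; apply/Ps; rewrite inE sq orbT.
Qed.

End LabelledSpan.

Section WeightSeparation.
Variables (F : fieldType) (V : lmodType F) (I : finType) (T : I -> {linear V -> V}).

Lemma eigenvector_sum_component (J : eqType) (s : seq J) (x : J -> V)
    (w : J -> I -> F) (c : J -> F) (mu : I -> F) (Y : V) :
  (forall j, j \in s -> forall k, T k (x j) = w j k *: x j) ->
  Y = \sum_(j <- s) c j *: x j -> Y != 0 -> (forall k, T k Y = mu k *: Y) ->
  exists2 j, j \in s & x j != 0 /\ w j =1 mu.
Proof.
elim: s c Y => [|j s IHs] c Y wx; first by rewrite big_nil => ->; rewrite eqxx.
have wx' : forall i, i \in s -> forall k, T k (x i) = w i k *: x i.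
  by move=> i si; apply: wx; rewrite inE si orbT.
rewrite big_cons => eY Y0 eigY.
have [xj0 | xj0] := eqVneq (x j) 0.
  have [i si ?] : exists2 i, i \in s & x i != 0 /\ w i =1 mu.
    by apply: (IHs c Y) => //; rewrite eY xj0 scaler0 add0r.
  by exists i; rewrite // inE si orbT.
have [/forallP wj | ] := boolP [forall k, w j k == mu k].
  by exists j; rewrite ?mem_head //; split=> // k; apply/eqP.
rewrite negb_forall => /existsP [k neq_k].
(* (T k - w j k) kills x j and rescales every other summand. *)
pose c' i := c i * (w i k - w j k).
have [i si ?] : exists2 i, i \in s & x i != 0 /\ w i =1 mu.
  apply: (IHs c' ((mu k - w j k) *: Y)) => //.
  - rewrite scalerBl -{1}eigY eY linearD linearZZ (wx j (mem_head _ _)) linear_sum.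
    rewrite scalerDr !scalerA [w j k * c j]mulrC opprD addrACA subrr add0r.
    rewrite scaler_sumr -sumrB.
    apply: eq_big_seq => i si; rewrite linearZZ wx' // !scalerA -scalerBl.
    by rewrite /c' mulrBr [w j k * _]mulrC.
  - by rewrite scaler_eq0 subr_eq0 eq_sym (negbTE neq_k).
  - by move=> l; rewrite linearZZ eigY !scalerA mulrC.
by exists i; rewrite // inE si orbT.
Qed.

End WeightSeparation.

Section CharZero.
Variable F : fieldType.
Hypothesis F_char0 : [pchar F] =i pred0.

Lemma intrF_eq0 (z : int) : (z%:~R == 0 :> F) = (z == 0).
Proof.
have natF_eq0 := (pcharf0P F).1 F_char0.
by case: z => m /=; rewrite ?NegzE ?mulrNz ?oppr_eq0 natF_eq0.
Qed.

Lemma intrF_inj : injective (intmul (1 : F)).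
Proof. by move=> a b /eqP; rewrite -subr_eq0 -intrB intrF_eq0 subr_eq0 => /eqP. Qed.

(* The a + k d, k : nat, are pairwise distinct, but G has finitely many eigenvalues. *)
Lemma eigenvectors_progression_eq0 N (G : 'M[F]_N) (x : nat -> 'rV[F]_N) (a d : int) :
  d != 0 -> (forall k, x k *m G = (a + d * k%:Z)%:~R *: x k) -> exists k, x k = 0.
Proof.
move=> d0 eig_x.
have [/existsP [k /eqP xk0] | ] := boolP [exists k : 'I_N.+1, x k == 0]; first by exists k.
rewrite negb_exists => /forallP x_neq0; suff : false by [].
have := @max_poly_roots _ (char_poly G) [seq (a + d * k%:Z)%:~R | k <- iota 0 N.+1].
rewrite size_char_poly size_map size_iota ltnn; apply=> //.
- by rewrite -lead_coef_eq0 (monicP (char_poly_monic G)) oner_eq0.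
- apply/allP => z /mapP [k]; rewrite mem_iota add0n => ltkN ->.
  rewrite -eigenvalue_root_char; apply/eigenvalueP.
  by exists (x k); [apply: eig_x | apply: (x_neq0 (Ordinal ltkN))].
- rewrite map_inj_uniq ?iota_uniq // => k l /intrF_inj /addrI.
  by rewrite ![d * _]mulrC => /(mulIf d0) [].
Qed.

End CharZero.

Section SL2.
Variables (F : fieldType) (V : lmodType F) (e f h : {linear V -> V}).
Hypothesis F_char0 : [pchar F] =i pred0.
Hypothesis sl2_ef : forall x, e (f x) - f (e x) = h x.
Hypothesis sl2_he : forall x, h (e x) - e (h x) = 2%:R *: e x.
Hypothesis sl2_hf : forall x, h (f x) - f (h x) = - (2%:R *: f x).

Lemma sl2_h_iter_f c y :
  h y = c *: y -> forall k, h (iter k f y) = (c - (2 * k)%:R) *: iter k f y.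
Proof.
move=> hy; elim=> [|k IHk] /=; first by rewrite subr0.
move/eqP: (sl2_hf (iter k f y)); rewrite IHk linearZZ subr_eq => /eqP ->.
by rewrite -scaleNr -scalerDl mulnS natrD; congr (_ *: _); ring.
Qed.

Lemma sl2_e_iter_f c y : h y = c *: y -> forall k,
  e (iter k.+1 f y) = iter k.+1 f (e y) + (k.+1%:R * (c - k%:R)) *: iter k f y.
Proof.
move=> hy; elim=> [|k IHk].
  by move/eqP: (sl2_ef y); rewrite hy subr_eq => /eqP ->; rewrite mul1r subr0 addrC.
move/eqP: (sl2_ef (iter k.+1 f y)); rewrite (sl2_h_iter_f hy) subr_eq => /eqP /= ->.
rewrite IHk linearD linearZZ addrCA -scalerDl; congr (_ + _ *: _).
by rewrite natrM !mulrSr; ring.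
Qed.

Lemma sl2_highest_eq0 x (m : nat) :
  e x = 0 -> h x = m%:R *: x -> iter m f x = 0 -> x = 0.
Proof.
move=> ex0 hx fmx; have natF_neq0 := (pcharf0P F).1 F_char0.
(* e f^(k+1) x = (k+1)(m-k) f^k x, and (k+1)(m-k) != 0 for k < m. *)
have lower k : (k < m)%N -> iter k.+1 f x = 0 -> iter k f x = 0.
  move=> ltkm fk0; move: (sl2_e_iter_f hx k).
  rewrite fk0 ex0 iter_fix ?linear0 // add0r => /esym/eqP.
  rewrite scaler_eq0 -natrB ?(ltnW ltkm) // -natrM natF_neq0 muln_eq0 subn_eq0.
  by rewrite leqNgt ltkm => /eqP.
suff down j : (j <= m)%N -> iter (m - j) f x = 0 by move: (down m (leqnn m)); rewrite subnn.
elim: j => [|j IHj] ltjm; first by rewrite subn0.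
apply: lower; first by rewrite ltn_subrL (leq_trans _ ltjm).
by rewrite subnSK // IHj // ltnW.
Qed.

Lemma sl2_weight_vector_eq0 p x (m : nat) : iter p e x = 0 ->
  h x = m%:R *: x -> (0 < m)%N -> iter m f x = 0 -> x = 0.
Proof.
elim: p x m => [|p IHp] x m; first by [].
move=> epx hx m_gt0 fmx; rewrite iterSr in epx.
have [ex0 | ex_neq0] := eqVneq (e x) 0; first exact: sl2_highest_eq0 hx fmx.
exfalso; move/eqP: ex_neq0; apply; apply: (IHp _ (m + 2)%N epx).
- move/eqP: (sl2_he x); rewrite hx linearZZ subr_eq => /eqP ->.
  by rewrite -scalerDl natrD addrC.
- by rewrite addn_gt0 m_gt0.
case: m m_gt0 hx fmx => // m _ hx fmx.
(* f^(m+1) e x is a multiple of f^m x, which f kills. *)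
move: (sl2_e_iter_f hx m); rewrite fmx linear0 => /esym/eqP; rewrite addr_eq0 => /eqP fex.
rewrite addnC iterD fex -scaleNr /= !linearZZ -[f (iter m f x)]/(iter m.+1 f x) fmx.
by rewrite linear0 !scaler0.
Qed.

End SL2.

Section LieBracket.
Variables (F : fieldType) (d : nat).
Implicit Types X Y Z : 'M[F]_d.

Lemma lie_is_linear X : linear (lie X).
Proof.
move=> a Y Z; rewrite /lie mulmxDr mulmxDl -scalemxAr -scalemxAl scalerBr.
by rewrite opprD addrACA.
Qed.

HB.instance Definition _ X :=
  GRing.isLinear.Build F 'M[F]_d 'M[F]_d *:%R (lie X) (lie_is_linear X).

Lemma lieDr X Y Z : lie X (Y + Z) = lie X Y + lie X Z.
Proof. exact: linearD. Qed.

Lemma lieZr a X Y : lie X (a *: Y) = a *: lie X Y.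
Proof. exact: linearZZ. Qed.

Lemma lie0r X : lie X 0 = 0.
Proof. exact: linear0. Qed.

Lemma lieC X Y : lie X Y = - lie Y X.
Proof. by rewrite /lie opprB. Qed.

Lemma lieNl X Y : lie (- X) Y = - lie X Y.
Proof. by rewrite /lie mulNmx mulmxN opprK opprB addrC. Qed.

Lemma lieZl a X Y : lie (a *: X) Y = a *: lie X Y.
Proof. by rewrite /lie -scalemxAl -scalemxAr scalerBr. Qed.

Lemma lie_jacobi X Y Z : lie X (lie Y Z) = lie (lie X Y) Z + lie Y (lie X Z).
Proof.
have zmod6 (M : zmodType) (p1 p2 p3 p4 p5 p6 : M) :
    p1 - p2 - (p3 - p4) = p1 - p5 - (p6 - p4) + (p5 - p3 - (p2 - p6)).
  rewrite !opprB !addrA (addrAC _ (- p3) p6) (addrAC _ p5 p6) addrNK.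
  by rewrite (addrAC _ p4 p5) addrNK (addrAC p1 (- p2) p4) addrAC.
by rewrite /lie !mulmxBl !mulmxBr !mulmxA; apply: zmod6.
Qed.

Lemma lie_mulmx m X Y (u : 'M[F]_(d, m)) : X *m (Y *m u) = lie X Y *m u + Y *m (X *m u).
Proof. by rewrite /lie mulmxBl !mulmxA subrK. Qed.

Lemma lieXX X : lie X X = 0.
Proof. exact: subrr. Qed.

Definition sl2_triple (e f h : 'M[F]_d) :=
  [/\ lie e f = h, lie h e = 2%:R *: e & lie h f = - (2%:R *: f)].

Hypothesis F_char0 : [pchar F] =i pred0.

Lemma sl2_triple_ad_eq0 (e f h : 'M[F]_d) p X (m : nat) : sl2_triple e f h ->
  iter p (lie e) X = 0 -> lie h X = m%:R *: X -> (0 < m)%N ->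
  iter m (lie f) X = 0 -> X = 0.
Proof.
case=> ef he hf.
apply: (sl2_weight_vector_eq0 (e := lie e) (f := lie f) (h := lie h) F_char0).
- by move=> Y /=; rewrite lie_jacobi addrK ef.
- by move=> Y /=; rewrite lie_jacobi addrK he lieZl.
- by move=> Y /=; rewrite lie_jacobi addrK hf lieNl lieZl.
Qed.

Lemma sl2_triple_mulmx_eq0 (e f h : 'M[F]_d) p (x : 'cV[F]_d) (m : nat) :
  sl2_triple e f h -> iter p (mulmx e) x = 0 -> h *m x = m%:R *: x -> (0 < m)%N ->
  iter m (mulmx f) x = 0 -> x = 0.
Proof.
case=> ef he hf.
apply: (sl2_weight_vector_eq0 (e := mulmx e) (f := mulmx f) (h := mulmx h) F_char0).
- by move=> y /=; rewrite lie_mulmx addrK ef.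
- by move=> y /=; rewrite lie_mulmx addrK he -scalemxAl.
- by move=> y /=; rewrite lie_mulmx addrK hf mulNmx -scalemxAl.
Qed.

End LieBracket.

Section CartanMatrix.
Variables (n : nat) (A : 'M[int]_n).
Implicit Types b c x : 'rV[int]_n.

Lemma pair_corootE b i : pair_coroot A b i = (b *m A^T) 0 i.
Proof. by rewrite mxE; apply: eq_bigr => j _; rewrite mxE. Qed.

Lemma pair_coroot0 i : pair_coroot A 0 i = 0.
Proof. by rewrite pair_corootE mul0mx mxE. Qed.

Lemma pair_corootD b c i : pair_coroot A (b + c) i = pair_coroot A b i + pair_coroot A c i.
Proof. by rewrite !pair_corootE mulmxDl mxE. Qed.

Lemma pair_corootN b i : pair_coroot A (- b) i = - pair_coroot A b i.
Proof. by rewrite /pair_coroot -sumrN; apply: eq_bigr => j _; rewrite mxE mulNr. Qed.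

Lemma pair_corootB b c i : pair_coroot A (b - c) i = pair_coroot A b i - pair_coroot A c i.
Proof. by rewrite pair_corootD pair_corootN. Qed.

Lemma pair_corootZ z b i : pair_coroot A (z *: b) i = z * pair_coroot A b i.
Proof. by rewrite !pair_corootE -scalemxAl mxE. Qed.

Lemma pair_coroot_delta i j : pair_coroot A (delta_mx 0 j) i = A i j.
Proof.
rewrite /pair_coroot (bigD1 j) //= mxE !eqxx mul1r big1 ?addr0 // => k /negbTE kj.
by rewrite mxE kj andbF mul0r.
Qed.

Definition height b : int := \sum_j b 0 j.

Lemma heightD b c : height (b + c) = height b + height c.
Proof. by rewrite /height -big_split; apply: eq_bigr => j _; rewrite mxE. Qed.

Lemma heightZ z b : height (z *: b) = z * height b.
Proof. by rewrite /height mulr_sumr; apply: eq_bigr => j _; rewrite mxE. Qed.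

Lemma height_delta i : height (delta_mx 0 i) = 1.
Proof.
rewrite /height (bigD1 i) //= mxE !eqxx big1 ?addr0 // => j /negbTE ji.
by rewrite mxE ji andbF.
Qed.

Lemma cartan_qform (D : 'rV[rat]_n) (x : 'rV[int]_n) :
  let S := \matrix_(i, j) (D 0 i * (A i j)%:~R) in
  let xr := map_mx intr x in
  (xr *m S *m xr^T) 0 0 = \sum_i (x 0 i)%:~R * D 0 i * (pair_coroot A x i)%:~R.
Proof.
move=> S xr; rewrite mxE; under eq_bigr do rewrite !mxE big_distrl /=.
rewrite exchange_big /=; apply: eq_bigr => i _.
rewrite /pair_coroot rmorph_sum mulr_sumr; apply: eq_bigr => j _.
by rewrite !mxE rmorphM /=; ring.
Qed.

Lemma map_intr_eq0 x : (map_mx intr x == 0 :> 'rV[rat]_n) = (x == 0).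
Proof.
apply/eqP/eqP => [/rowP x0 | ->]; last by rewrite map_mx0.
by apply/rowP => j; move/eqP: (x0 j); rewrite !mxE intr_eq0 => /eqP.
Qed.

Hypothesis hA : finite_cartan A.

Lemma cartan_diag i : A i i = 2.
Proof. by case: hA. Qed.

Lemma srefl_involutive i : involutive (srefl A i).
Proof.
move=> b; rewrite /srefl pair_corootB pair_corootZ pair_coroot_delta cartan_diag.
rewrite -addrA -opprD -scalerDl.
by rewrite [X in X *: _](_ : _ = 0) ?scale0r ?subr0 //; ring.
Qed.

Lemma pair_coroot_eq0 x : (forall i, pair_coroot A x i = 0) -> x = 0.
Proof.
move=> x0; case: hA => _ _ _ [D [_ [_ pos_def]]]; apply/eqP; apply: contraT.
rewrite -map_intr_eq0 => /pos_def; rewrite cartan_qform big1 ?ltxx // => i _.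
by rewrite x0 mulr0.
Qed.

Lemma pair_coroot_inj b c : (forall i, pair_coroot A b i = pair_coroot A c i) -> b = c.
Proof.
move=> bc; apply/eqP; rewrite -subr_eq0; apply/eqP; apply: pair_coroot_eq0 => i.
by rewrite pair_corootB bc subrr.
Qed.

Lemma exists_pair_coroot_gt0 x : (forall j, 0 <= x 0 j) -> x != 0 ->
  exists i, 0 < pair_coroot A x i.
Proof.
move=> x_ge0 x_neq0; case: hA => _ _ _ [D [D_gt0 [_ pos_def]]].
have [/existsP [i] | ] := boolP [exists i, 0 < pair_coroot A x i]; first by exists i.
rewrite negb_exists => /forallP x_le0; exfalso.
have := pos_def (map_mx intr x); rewrite map_intr_eq0 x_neq0 cartan_qform => /(_ isT).
apply/negP; rewrite -leNgt; apply: sumr_le0 => i _; rewrite -mulrA.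
have := x_ge0 i; rewrite le_eqVlt => /orP [/eqP <- | xi_gt0]; first by rewrite mul0r.
by rewrite pmulr_rle0 ?ltr0z // pmulr_rle0 ?D_gt0 // lerz0 leNgt x_le0.
Qed.

End CartanMatrix.

Section Representation.
Variables (F : fieldType) (n : nat) (A : 'M[int]_n) (d : nat).
Variables (E Fm H : 'I_n -> 'M[F]_d).
Hypothesis F_char0 : [pchar F] =i pred0.
Hypothesis hA : finite_cartan A.
Hypothesis hrep : is_rep A E Fm H.

Lemma lie_HH i j : lie (H i) (H j) = 0. Proof. by case: hrep. Qed.
Lemma lie_HE i j : lie (H i) (E j) = (A i j)%:~R *: E j. Proof. by case: hrep. Qed.
Lemma lie_HF i j : lie (H i) (Fm j) = - ((A i j)%:~R *: Fm j). Proof. by case: hrep. Qed.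
Lemma lie_EF i j : lie (E i) (Fm j) = if i == j then H i else 0. Proof. by case: hrep. Qed.

Lemma lie_FH j i : lie (Fm j) (H i) = (A i j)%:~R *: Fm j.
Proof. by rewrite lieC lie_HF opprK. Qed.

Definition lowers_by (Y : 'M[F]_d) (b : 'rV[int]_n) :=
  forall k, lie (H k) Y = (- pair_coroot A b k)%:~R *: Y.

Lemma lowers_by_F j Y b : lowers_by Y b -> lowers_by (lie (Fm j) Y) (b + delta_mx 0 j).
Proof.
move=> Yb k; rewrite lie_jacobi lie_HF -scaleNr lieZl Yb lieZr -scalerDl.
by rewrite pair_corootD pair_coroot_delta -intrN -intrD opprD addrC.
Qed.

Lemma lowers_by_E j Y b : lowers_by Y b -> lowers_by (lie (E j) Y) (b - delta_mx 0 j).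
Proof.
move=> Yb k; rewrite lie_jacobi lie_HE Yb lieZr lieZl -scalerDl.
by rewrite pair_corootB pair_coroot_delta -intrD opprB addrC.
Qed.

Lemma lowers_by_iter_F i Y b : lowers_by Y b -> forall k,
  lowers_by (iter k (lie (Fm i)) Y) (b + k%:Z *: delta_mx 0 i).
Proof.
move=> Yb; elim=> [|k IHk] /=; first by rewrite scale0r addr0.
by rewrite -[k.+1]addn1 PoszD scalerDl scale1r addrA; apply: lowers_by_F.
Qed.

Lemma lowers_by_iter_E i Y b : lowers_by Y b -> forall k,
  lowers_by (iter k (lie (E i)) Y) (b - k%:Z *: delta_mx 0 i).
Proof.
move=> Yb; elim=> [|k IHk] /=; first by rewrite scale0r subr0.
by rewrite -[k.+1]addn1 PoszD scalerDl scale1r opprD addrA; apply: lowers_by_E.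
Qed.

Lemma lowers_by_inj Y b c : Y != 0 -> lowers_by Y b -> lowers_by Y c -> b = c.
Proof.
move=> Y0 Yb Yc; apply: (pair_coroot_inj hA) => k.
apply/oppr_inj/(intrF_inj F_char0)/eqP; move/eqP: (Yb k); rewrite Yc eq_sym -subr_eq0.
by rewrite -scalerBl scaler_eq0 (negbTE Y0) orbF subr_eq0.
Qed.

Inductive fword : 'M[F]_d -> 'rV[int]_n -> Prop :=
| fword_gen i : fword (Fm i) (delta_mx 0 i)
| fword_lie j X b : fword X b -> fword (lie (Fm j) X) (b + delta_mx 0 j).

Notation nminus := (lspan fword).

Lemma fword_lowers_by W b : fword W b -> lowers_by W b.
Proof.
elim=> [i k | j X c _]; last exact: lowers_by_F.
by rewrite lie_HF pair_coroot_delta intrN scaleNr.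
Qed.

Lemma fword_pos W b : fword W b -> (forall j, 0 <= b 0 j) /\ 0 < height b.
Proof.
have delta_ge0 i j : 0 <= (delta_mx 0 i : 'rV[int]_n) 0 j by rewrite mxE; case: (_ && _).
elim=> [i | j X c _ [c_ge0 c_gt0]]; first by rewrite height_delta.
split=> [k|]; first by rewrite mxE addr_ge0.
by rewrite heightD height_delta ltr_wpDr.
Qed.

Lemma fword_delta W i : fword W (delta_mx 0 i) -> W = Fm i.
Proof.
move eq_b : (delta_mx 0 i) => b wW; case: wW eq_b => [j | j X c wX] eq_b.
  by move/rowP: eq_b => /(_ j); rewrite !mxE !eqxx /=; case: eqP => [-> | _].
have [_] := fword_pos wX; move/(congr1 (@height _)): eq_b.
by rewrite heightD !height_delta => /esym/(canRL (addrK 1)); rewrite subrr => ->.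
Qed.

Lemma fword_scaled_delta W i (k : int) : fword W (k *: delta_mx 0 i) -> W = 0 \/ k = 1.
Proof.
move eq_b : (k *: delta_mx 0 i) => b wW; elim: wW k eq_b => [j | j X c wX IHX] k eq_b.
  right; move/rowP: eq_b => /(_ j); rewrite !mxE !eqxx /=.
  by case: eqP => _; rewrite ?mulr1 // mulr0.
left; have [c_ge0 _] := fword_pos wX.
have [ji | ji] := eqVneq j i; last first.
  move/rowP: eq_b => /(_ j); rewrite !mxE eqxx (negbTE ji) /= mulr0 eqxx => /esym/eqP.
  by rewrite paddr_eq0 // oner_eq0 andbF.
rewrite ji in eq_b *; have eq_c : c = (k - 1) *: delta_mx 0 i.
  by rewrite scalerBl scale1r eq_b addrK.
have [-> | k1] := IHX _ (esym eq_c); first by rewrite lie0r.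
by rewrite eq_c k1 scale1r in wX; rewrite (fword_delta wX) lieXX.
Qed.

Lemma nminus_lie_F j Y : nminus Y -> nminus (lie (Fm j) Y).
Proof.
apply: lspan_map => [|a X Z|X b wX]; [exact: lspan0 | exact: lspan_lin |].
exact: lspan_gen (fword_lie j wX).
Qed.

Lemma nminus_lie_H k Y : nminus Y -> nminus (lie (H k) Y).
Proof.
apply: lspan_map => [|a X Z|X b wX]; [exact: lspan0 | exact: lspan_lin |].
by rewrite /= (fword_lowers_by wX); apply/lspanZ/lspan_gen/wX.
Qed.

Lemma nminus_lie_E i Y : nminus Y ->
  exists2 Z, nminus Z & exists a, lie (E i) Y = Z + a *: H i.
Proof.
pose nminus_plus_H Y' := exists2 Z, nminus Z & exists a, Y' = Z + a *: H i.
apply: (lspan_map (Q := nminus_plus_H)) => [|a X Z [X' nX' [x ->]] [Z' nZ' [z ->]] | X b].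
- by exists 0; [exact: lspan0 | exists 0; rewrite scale0r addr0].
- exists (a *: X' + Z'); first exact: lspan_lin.
  by exists (a * x + z); rewrite scalerDr scalerDl scalerA addrACA.
elim=> [j | j W c wW [Z nZ [z /= IHW]]] /=.
  exists 0; first exact: lspan0.
  rewrite lie_EF; case: eqP => _; first by exists 1; rewrite add0r scale1r.
  by exists 0; rewrite scale0r addr0.
exists (lie (lie (E i) (Fm j)) W + (lie (Fm j) Z + (z * (A i j)%:~R) *: Fm j)).
  apply/lspanD/(lspanD (nminus_lie_F j nZ) (lspanZ _ (lspan_gen (fword_gen j)))).
  rewrite lie_EF; case: eqP => _; first exact/nminus_lie_H/(lspan_gen wW).
  by rewrite lieC lie0r oppr0; apply: lspan0.
by exists 0; rewrite scale0r addr0 lie_jacobi IHW lieDr lieZr lie_FH scalerA.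
Qed.

Lemma nminus_lie_E_lowers i Y b : nminus Y -> lowers_by Y b -> b != delta_mx 0 i ->
  nminus (lie (E i) Y).
Proof.
move=> nY Yb b_neq; have [Z nZ [a eEY]] := nminus_lie_E i nY.
have [k pk_neq0] : exists k, pair_coroot A (b - delta_mx 0 i) k != 0.
  apply/existsP; apply: contraR b_neq; rewrite negb_exists => /forallP pk0.
  by rewrite -subr_eq0; apply/eqP/(pair_coroot_eq0 hA) => k; apply/eqP/negPn/pk0.
(* ad H_k kills the H_i-component and acts on ad E_i Y by a nonzero scalar. *)
have := lowers_by_E i Yb k; rewrite [in LHS]eEY lieDr lieZr lie_HH scaler0 addr0 => eHZ.
have c_neq0 : (- pair_coroot A (b - delta_mx 0 i) k)%:~R != 0 :> F.
  by rewrite intrF_eq0 // oppr_eq0.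
by rewrite -[lie _ _]scale1r -(mulVf c_neq0) -scalerA -eHZ; apply/lspanZ/nminus_lie_H.
Qed.

Lemma nminus_component Y b : nminus Y -> Y != 0 -> lowers_by Y b ->
  exists2 W, fword W b & W != 0.
Proof.
move=> [s ws eY] Y0 Yb.
have [p sp [p0 wp]] := eigenvector_sum_component (T := fun k => lie (H k))
  (x := fun p => p.1.2) (w := fun p k => (- pair_coroot A p.2 k)%:~R) (c := fun p => p.1.1)
  (mu := fun k => (- pair_coroot A b k)%:~R) (fun p sp => fword_lowers_by (ws p sp)) eY Y0 Yb.
exists p.1.2 => //; suff <- : p.2 = b by apply: ws.
apply: lowers_by_inj p0 (fword_lowers_by (ws p sp)) _ => k.
by rewrite (fword_lowers_by (ws p sp)) wp.
Qed.

Lemma lie_F_nilpotent i Y b : lowers_by Y b -> exists p, iter p (lie (Fm i)) Y = 0.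
Proof.
move=> Yb; have [k Fk0] : exists k, mxvec (iter k (lie (Fm i)) Y) = 0.
  apply: (eigenvectors_progression_eq0 F_char0 (G := lin_mx (lie (H i)))
    (a := - pair_coroot A b i) (d := -2)) => // k.
  rewrite mul_vec_lin /= (lowers_by_iter_F i Yb k i) linearZZ /=.
  rewrite pair_corootD pair_corootZ pair_coroot_delta cartan_diag //.
  by congr (_%:~R *: _); ring.
by exists k; apply/eqP; rewrite -mxvec_eq0 Fk0.
Qed.

Lemma sl2_triple_FEH i : sl2_triple (Fm i) (E i) (- H i).
Proof.
split; first by rewrite lieC lie_EF eqxx.
  by rewrite lieNl lie_HF opprK cartan_diag.
by rewrite lieNl lie_HE cartan_diag.
Qed.

Lemma iter_lie_E_neq0 i Y b (m : nat) : Y != 0 -> lowers_by Y b ->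
  pair_coroot A b i = m%:Z -> (0 < m)%N -> iter m (lie (E i)) Y != 0.
Proof.
move=> Y0 Yb bi m_gt0; have [p Fp0] := lie_F_nilpotent i Yb.
apply: contra Y0 => /eqP Em0; apply/eqP.
apply: (sl2_triple_ad_eq0 F_char0 (sl2_triple_FEH i) Fp0 _ m_gt0 Em0).
by rewrite lieNl Yb bi intrN scaleNr opprK.
Qed.

Lemma nminus_reflect i Y b (m : nat) : nminus Y -> Y != 0 -> lowers_by Y b ->
  pair_coroot A b i = m%:Z -> (0 < m)%N -> (exists2 j, j != i & b 0 j != 0) ->
  exists2 Y', nminus Y' & Y' != 0 /\ lowers_by Y' (srefl A i b).
Proof.
move=> nY Y0 Yb bi m_gt0 [j ji bj_neq0]; exists (iter m (lie (E i)) Y); last split.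
- elim: {bi m_gt0}m => [|k IHk] //=.
  apply: nminus_lie_E_lowers IHk (lowers_by_iter_E i Yb k) _.
  apply: contra_neq bj_neq0 => /rowP /(_ j).
  by rewrite !mxE (negbTE ji) !andbF mulr0 subr0.
- exact: iter_lie_E_neq0 Yb bi m_gt0.
- by have := lowers_by_iter_E i Yb m; rewrite /srefl bi.
Qed.

Lemma root_of_nminus Y b : nminus Y -> Y != 0 -> lowers_by Y b -> is_root A b.
Proof.
suff root_of_height N b' Y' : height b' <= N%:Z -> nminus Y' -> Y' != 0 ->
    lowers_by Y' b' -> is_root A b'.
  by apply: (root_of_height `|height b|%N); rewrite abszE ler_norm.
elim: N b' Y' => [|N IHN] {}b {}Y hbN nY Y0 Yb; have [W wW W0] := nminus_component nY Y0 Yb;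
  have [b_ge0 hb_gt0] := fword_pos wW; first by move: (lt_le_trans hb_gt0 hbN); rewrite ltxx.
have b_neq0 : b != 0.
  by apply: contraTneq hb_gt0 => ->; rewrite /height big1 ?ltxx // => j _; rewrite mxE.
have [i bi_gt0] := exists_pair_coroot_gt0 hA b_ge0 b_neq0.
have [/existsP [j /andP [ji bj_neq0]] | ] := boolP [exists j, (j != i) && (b 0 j != 0)].
  case bi : (pair_coroot A b i) bi_gt0 => [m | //]; rewrite ltz_nat => m_gt0.
  have [Y' nY' [Y'0 Y'b]] := nminus_reflect nY Y0 Yb bi m_gt0 (ex_intro2 _ _ j ji bj_neq0).
  rewrite -(srefl_involutive hA i b); apply/root_refl/(IHN _ Y') => //.
  by rewrite /srefl bi -scaleNr heightD heightZ height_delta mulr1; lia.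
rewrite negb_exists => /forallP b_on_i.
have eb : b = b 0 i *: delta_mx 0 i.
  apply/rowP => j; rewrite !mxE eqxx /=; have [-> | ji] := eqVneq j i; first by rewrite mulr1.
  by move: (b_on_i j); rewrite ji /= negbK mulr0 => /eqP.
have [] := fword_scaled_delta (eq_ind _ (fword W) wW _ eb); first by move/eqP: W0.
by move=> bi1; rewrite eb bi1 scale1r; apply: root_simple.
Qed.

Lemma mulmx_F_nilpotent j (u : 'cV[F]_d) (c : int) :
  H j *m u = c%:~R *: u -> exists p, iter p (mulmx (Fm j)) u = 0.
Proof.
move=> Hu; have H_F (y : 'cV[F]_d) :
    H j *m (Fm j *m y) - Fm j *m (H j *m y) = - (2%:R *: (Fm j *m y)).
  by rewrite lie_mulmx addrK lie_HF (cartan_diag hA) mulNmx -scalemxAl.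
have [k Fk0] : exists k, (iter k (mulmx (Fm j)) u)^T = 0.
  apply: (eigenvectors_progression_eq0 F_char0 (G := (H j)^T) (a := c) (d := -2)) => // k.
  rewrite -trmx_mul (sl2_h_iter_f (h := mulmx (H j)) (f := mulmx (Fm j)) H_F Hu) linearZ /=.
  by congr (_ *: _); rewrite intrD mulNr intrN -PoszM.
by exists k; apply: trmx_inj; rewrite Fk0 trmx0.
Qed.

Section HighestWeight.
Variable lam : 'rV[int]_n.
Variable v : 'cV[F]_d.
Hypothesis v_E : forall i, E i *m v = 0.
Hypothesis v_H : forall i, H i *m v = (lam 0 i)%:~R *: v.

Lemma F_highest_eq0 j : lam 0 j = 0 -> Fm j *m v = 0.
Proof.
move=> lamj0; have Hv0 : H j *m v = 0 by rewrite v_H lamj0 scale0r.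
have HFv : H j *m (Fm j *m v) = (-2)%:~R *: (Fm j *m v).
  by rewrite lie_mulmx lie_HF Hv0 mulmx0 addr0 mulNmx (cartan_diag hA) -scalemxAl -scaleNr.
have [p Fp0] := mulmx_F_nilpotent HFv.
apply: (sl2_triple_mulmx_eq0 (m := 2) F_char0 (sl2_triple_FEH j) Fp0 _ isT).
  by rewrite mulNmx HFv -scaleNr opprK.
by rewrite /= [E j *m (Fm j *m v)]lie_mulmx lie_EF eqxx v_E mulmx0 addr0 Hv0 mulmx0.
Qed.

Definition meets_Supp (g : 'rV[int]_n) := exists j, SuppD g j && Supp lam j.

Inductive pbw_vec : 'cV[F]_d -> 'rV[int]_n -> Prop :=
| pbw_hw : pbw_vec v 0
| pbw_mul X g u b : fword X g -> meets_Supp g -> pbw_vec u b -> pbw_vec (X *m u) (b + g).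

Notation pbw_span := (lspan pbw_vec).

Lemma pbw_vec_weight u b : pbw_vec u b ->
  forall k, H k *m u = (lam 0 k - pair_coroot A b k)%:~R *: u.
Proof.
elim=> [|X g u' b' wX _ _ IHu] k; first by rewrite v_H pair_coroot0 subr0.
rewrite lie_mulmx (fword_lowers_by wX) IHu -scalemxAl -scalemxAr -scalerDl pair_corootD.
by rewrite -intrD; congr (_%:~R *: _); ring.
Qed.

Lemma pbw_vec_roots u b : pbw_vec u b -> u != 0 ->
  exists s, (forall x, x \in s -> Phi_plus_of A lam x) /\ b = \sum_(x <- s) x.
Proof.
elim=> [|X g u' b' wX meets_g _ IHu] u0; first by exists [::]; rewrite big_nil.
have u'0 : u' != 0 by apply: contraNneq u0 => ->; rewrite mulmx0.
have X0 : X != 0 by apply: contraNneq u0 => ->; rewrite mul0mx.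
have [s [s_pos ->]] := IHu u'0.
exists (g :: s); rewrite big_cons addrC; split=> // x; rewrite inE => /orP [/eqP -> | /s_pos //].
split=> //; split; last by have [] := fword_pos wX.
exact: root_of_nminus (lspan_gen wX) X0 (fword_lowers_by wX).
Qed.

Lemma pbw_span_mul_word X g x : fword X g -> meets_Supp g -> pbw_span x -> pbw_span (X *m x).
Proof.
move=> wX meets_g; apply: lspan_map => [|a y z|u b pu]; [exact: lspan0 | exact: lspan_lin |].
exact: lspan_gen (pbw_mul wX meets_g pu).
Qed.

Lemma pbw_span_F j x : pbw_span x -> pbw_span (Fm j *m x).
Proof.
apply: lspan_map => [|a y z|u b pu] /=; [exact: lspan0 | exact: lspan_lin |].
have [lamj0 | lamj_neq0] := eqVneq (lam 0 j) 0; last first.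
  by apply: lspan_gen (pbw_mul (fword_gen j) _ pu); exists j; rewrite /SuppD /Supp mxE !eqxx.
(* F_j kills v and commutes with the words up to words which still meet Supp(lam). *)
elim: pu => [|X g u' b' wX meets_g pu' IHu].
  by rewrite F_highest_eq0 //; apply: lspan0.
rewrite lie_mulmx; apply: lspanD; last exact: pbw_span_mul_word wX meets_g IHu.
apply: lspan_gen (pbw_mul (fword_lie j wX) _ pu').
have [k /andP [gk_neq0 lamk_neq0]] := meets_g; exists k.
have kj : k != j by apply: contraNneq lamk_neq0 => ->; rewrite lamj0.
by rewrite /SuppD /Supp !mxE (negbTE kj) andbF addr0; apply/andP.
Qed.

Lemma pbw_span_fword W c x : fword W c -> pbw_span x -> pbw_span (W *m x).
Proof.
move=> wW; elim: wW x => [j | j X b _ IHX] x px; first exact: pbw_span_F.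
rewrite /lie mulmxBl -!mulmxA; apply: lspanD; first exact/pbw_span_F/IHX.
by rewrite -scaleN1r; apply/lspanZ/IHX/pbw_span_F.
Qed.

Lemma pbw_span_nminus Z x : nminus Z -> pbw_span x -> pbw_span (Z *m x).
Proof.
move=> nZ px; rewrite -[Z *m x]/(mulmxr x Z).
apply: lspan_map nZ => [|a y z|W c wW]; [exact: lspan0 | exact: lspan_lin |].
exact: pbw_span_fword wW px.
Qed.

Lemma pbw_span_H k x : pbw_span x -> pbw_span (H k *m x).
Proof.
apply: lspan_map => [|a y z|u b pu] /=; [exact: lspan0 | exact: lspan_lin |].
by rewrite (pbw_vec_weight pu); apply/lspanZ/(lspan_gen pu).
Qed.

Lemma pbw_span_E i x : pbw_span x -> pbw_span (E i *m x).
Proof.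
apply: lspan_map => [|a y z|u b pu] /=; [exact: lspan0 | exact: lspan_lin |].
elim: pu => [|X g u' b' wX _ pu' IHu]; first by rewrite v_E; apply: lspan0.
rewrite lie_mulmx; have [Z nZ [a ->]] := nminus_lie_E i (lspan_gen wX).
rewrite mulmxDl -scalemxAl -addrA; apply: lspanD; first exact: pbw_span_nminus nZ (lspan_gen pu').
by apply: lspan_lin; [exact/pbw_span_H/(lspan_gen pu') | exact: pbw_span_fword wX IHu].
Qed.

Definition pbw_rows m (U : 'M[F]_(m, d)) := forall y : 'rV[F]_d, (y <= U)%MS -> pbw_span y^T.

Lemma pbw_rows_adds m1 m2 (U1 : 'M_(m1, d)) (U2 : 'M_(m2, d)) :
  pbw_rows U1 -> pbw_rows U2 -> pbw_rows (U1 + U2)%MS.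
Proof.
move=> pU1 pU2 y /sub_addsmxP [[y1 y2] /= ->]; rewrite linearD /=.
by apply: lspanD; [apply: pU1 | apply: pU2]; apply: submxMl.
Qed.

Lemma pbw_rows_sums (U : 'I_n -> 'M_d) :
  (forall i, pbw_rows (U i)) -> pbw_rows (\sum_i U i)%MS.
Proof.
move=> pU y /sub_sumsmxP [u ->]; rewrite linear_sum /=.
elim/big_ind: _ => [|y1 y2|i _]; [exact: lspan0 | exact: lspanD |].
by apply: (pU i); apply: submxMl.
Qed.

Lemma pbw_rows_mul m (U : 'M_(m, d)) X : pbw_rows U ->
  (forall x, pbw_span x -> pbw_span (X *m x)) -> pbw_rows (U *m X^T).
Proof.
move=> pU pX y /submxP [D ->]; rewrite mulmxA trmx_mul trmxK.
by apply/pX/pU/submxMl.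
Qed.

Definition span_step (U : 'M[F]_d) : 'M[F]_d :=
  (U + \sum_i (U *m (E i)^T + U *m (Fm i)^T + U *m (H i)^T))%MS.

Definition span_chain k := iter k span_step <<v^T>>%MS.

Lemma pbw_rows_chain k : pbw_rows (span_chain k).
Proof.
elim: k => [|k IHk] /=.
  move=> y; rewrite genmxE => /submxP [D ->].
  by rewrite trmx_mul trmxK [D^T]mx11_scalar mul_mx_scalar; apply/lspanZ/lspan_gen/pbw_hw.
apply: pbw_rows_adds => //; apply: pbw_rows_sums => i.
by do 2?apply: pbw_rows_adds; apply: pbw_rows_mul IHk _;
  [exact: pbw_span_E | exact: pbw_span_F | exact: pbw_span_H].
Qed.

Lemma span_chain_stationary : exists k, (span_chain k.+1 <= span_chain k)%MS.
Proof.
have [/existsP [k] | ] := boolP [exists k : 'I_d.+1, (span_chain k.+1 <= span_chain k)%MS].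
  by exists k.
rewrite negb_exists => /forallP not_stat; exfalso.
suff rank_ge k : (k <= d.+1)%N -> (k <= \rank (span_chain k))%N.
  by move: (rank_ge _ (leqnn _)); rewrite leqNgt ltnS rank_leq_col.
elim: k => [|k IHk] // ltkd; apply: leq_ltn_trans (IHk (ltnW ltkd)) _.
have : (span_chain k < span_chain k.+1)%MS.
  by rewrite ltmxE addsmxSl (not_stat (Ordinal ltkd)).
by rewrite ltmxErank => /andP [].
Qed.

Lemma pbw_span_full : irreducible_rep E Fm H -> v != 0 -> forall x, pbw_span x.
Proof.
move=> irr v_neq0 x; have [k stat] := span_chain_stationary.
set U := span_chain k in stat.
have stable i : [&& stable_col U (E i), stable_col U (Fm i) & stable_col U (H i)].
  apply/and3P; split; apply: submx_trans stat; apply: submx_trans (addsmxSr _ _);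
    apply: (sumsmx_sup i) => //.
  - by apply: submx_trans (addsmxSl _ _) (addsmxSl _ _).
  - by apply: submx_trans (addsmxSr _ _) (addsmxSl _ _).
  - exact: addsmxSr.
have [U0 | U_full] := irr U stable; last first.
  by rewrite -[x]trmxK; apply: (pbw_rows_chain (k := k)); rewrite submx_full.
exfalso; move/eqP: v_neq0; apply; apply: trmx_inj; apply/eqP; rewrite trmx0 -submx0 -U0.
rewrite /U; elim: {stat stable U0 U}k => [|k IHk] /=; first by rewrite genmxE.
exact: submx_trans IHk (addsmxSl _ _).
Qed.

Lemma pbw_vec_of_weight (pi : 'rV[int]_n) (w : 'cV[F]_d) : pbw_span w -> w != 0 ->
  (forall i, H i *m w = (pi 0 i)%:~R *: w) ->
  exists u b, [/\ pbw_vec u b, u != 0 & forall k, lam 0 k - pair_coroot A b k = pi 0 k].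
Proof.
move=> [s ps ew] w0 Hw.
have [p sp [p0 wp]] := eigenvector_sum_component (T := fun k => mulmx (H k))
  (x := fun p => p.1.2) (w := fun p k => (lam 0 k - pair_coroot A p.2 k)%:~R) (c := fun p => p.1.1)
  (mu := fun k => (pi 0 k)%:~R) (fun p sp => pbw_vec_weight (ps p sp)) ew w0 Hw.
exists p.1.2, p.2; split=> [|//|k]; first exact: ps.
exact/(intrF_inj F_char0)/wp.
Qed.

End HighestWeight.

End Representation.

Theorem proposition2p1
  (F : closedFieldType) (hchar : [pchar F] =i pred0)
  (n : nat) (A : 'M[int]_n) (hA : finite_cartan A)
  (d : nat) (E Fm H : 'I_n -> 'M[F]_d) (hrep : is_rep A E Fm H)
  (lam : 'rV[int]_n) (hdom : dominant lam)
  (hhw : highest_weight E H lam) (hirr : irreducible_rep E Fm H)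
  (pi : 'rV[int]_n) (hpi : is_weight H pi) :
  le_lam A lam pi lam.
Proof.
have [v [v_neq0 hv]] := hhw; have [w [w_neq0 Hw]] := hpi.
have v_E i : E i *m v = 0 by case: (hv i).
have v_H i : H i *m v = (lam 0 i)%:~R *: v by case: (hv i).
have w_span := pbw_span_full hchar hA hrep v_E v_H hirr v_neq0 w.
have [u [b [pu u_neq0 ub]]] := pbw_vec_of_weight hchar hrep v_H w_span w_neq0 Hw.
have [s [s_pos eb]] := pbw_vec_roots hchar hA hrep pu u_neq0.
exists s; split=> //; apply/rowP => k.
by rewrite !mxE -eb -ub opprB addrC subrK.
Qed.
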